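(* Fix $N\ge 1$ and $\Delta t>0$. Let $\mathbf{b}_n,\mathbf{b}_{n+1}\in\mathbb{C}^N$ with components $b_{j,n},b_{j,n+1}$, with the convention $b_{0,m}=b_{N+1,m}=0$ for $m\in\{n,n+1\}$, and suppose that $\mathbf{b}_{n+1}$ is an exact solution of the system $$b_{j,n+1}=b_{j,n}+\Delta t\Big(-i\,|b|^2_{j,n+1/2}\,b_{j,n+1/2}+2i\,\overline{b_{j,n+1/2}}\,\big[(b^2)_{j+1,n+1/2}+(b^2)_{j-1,n+1/2}\big]\Big),\qquad j=1,\dots,N,$$ where $b_{j,n+1/2}=\tfrac12(b_{j,n}+b_{j,n+1})$, $|b|^2_{j,n+1/2}=\tfrac12(|b_{j,n}|^2+|b_{j,n+1}|^2)$ and $(b^2)_{j,n+1/2}=\tfrac12(b_{j,n}^2+b_{j,n+1}^2)$. Then $\mathcal{H}[\mathbf{b}_{n+1}]=\mathcal{H}[\mathbf{b}_n]$, where $$\mathcal{H}[\mathbf{b}]=\sum_{j=1}^N\Big(\tfrac14|b_j|^4-\operatorname{Re}\big(\bar b_j^{\,2}\,b_{j-1}^2\big)\Big),\qquad b_0=0.$$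
   Context: This is an energy-preserving discretization of the toy model system $-i\dot b_j=-|b_j|^2b_j+2b_{j-1}^2\bar b_j+2b_{j+1}^2\bar b_j$, $j=1,\dots,N$, with $b_0=b_{N+1}=0$, whose Hamiltonian is $\mathcal{H}$. *)

From mathcomp Require Import all_boot all_order all_algebra.
From mathcomp Require Import complex.
Set Implicit Arguments. Unset Strict Implicit. Unset Printing Implicit Defensive.
Import Order.TTheory GRing.Theory Num.Theory.
Local Open Scope ring_scope.

(* Complex numbers are R[i] (mathcomp-real-closed) for a real closed field R
   (e.g. the reals); R[i] is a numClosedFieldType, so we use the generic
   notations `|z| (modulus), 'Re z, z^* (conjugate), 'i.
   A vector b in C^N is a function 'I_N -> R[i]; component b_j (1 <= j <= N)
   is b (j-1), and bx b j extends it by b_0 = b_{N+1} = 0 (and 0 beyond). *)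
Definition bx (R : rcfType) (N : nat) (b : 'I_N -> R[i]) (j : nat) : R[i] :=
  if j is k.+1 then oapp b 0 [pick i : 'I_N | nat_of_ord i == k] else 0.

Definition Ham (R : rcfType) (N : nat) (b : 'I_N -> R[i]) : R[i] :=
  \sum_(1 <= j < N.+1)
     (`|bx b j| ^+ 4 / 4 - 'Re ((bx b j)^* ^+ 2 * (bx b j.-1) ^+ 2)).

Definition bmid (R : rcfType) N (b0 b1 : 'I_N -> R[i]) (j : nat) : R[i] :=
  (bx b0 j + bx b1 j) / 2.
Definition absmid (R : rcfType) N (b0 b1 : 'I_N -> R[i]) (j : nat) : R[i] :=
  (`|bx b0 j| ^+ 2 + `|bx b1 j| ^+ 2) / 2.
Definition sqmid (R : rcfType) N (b0 b1 : 'I_N -> R[i]) (j : nat) : R[i] :=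
  ((bx b0 j) ^+ 2 + (bx b1 j) ^+ 2) / 2.

Definition scheme (R : rcfType) N (dt : R) (b0 b1 : 'I_N -> R[i]) : Prop :=
  forall j : nat, (1 <= j <= N)%N ->
    bx b1 j = bx b0 j + (dt%:C)%C *
      (- 'i * absmid b0 b1 j * bmid b0 b1 j
       + 2 * 'i * (bmid b0 b1 j)^* * (sqmid b0 b1 j.+1 + sqmid b0 b1 j.-1)).

From mathcomp Require Import all_boot all_order all_algebra.
From mathcomp Require Import complex ring.
Import Order.TTheory GRing.Theory Num.Theory.
Local Open Scope ring_scope.

(* The midpoint scheme is a discrete gradient method.  With [d_j = b_{j,n+1} - b_{j,n}],
   the increments of [|b_j|^4/4] and of [Re(conj(b_j)^2 b_{j-1}^2)] are exactly
   real parts of [conj(d_j)] against the midpoint quantities (discrete chain and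
   product rules).  After shifting the index in the coupling terms (using
   [b_0 = b_{N+1} = 0]) the energy increment becomes
   [sum_j Re(conj(d_j) W_j)] (with [W_j] the [force] below), where the scheme reads [d_j = -i dt W_j]; each term
   is then [Re(i dt |W_j|^2) = 0] because [dt] is real. *)

Section DiscreteGradient.
Context {C : numClosedFieldType}.
Implicit Types u v p q r s c w : C.

Definition energy_density u p := `|u| ^+ 4 / 4 - 'Re (u^* ^+ 2 * p ^+ 2).
Definition mid u v := (u + v) / 2.
Definition abs2_mid u v := (`|u| ^+ 2 + `|v| ^+ 2) / 2.
Definition sq_mid u v := (u ^+ 2 + v ^+ 2) / 2.
Definition coupling u v r s := 2 * 'Re ((mid u v * (v - u))^* * sq_mid r s).
Definition force u v p q r s :=
  abs2_mid u v * mid u v - 2 * (mid u v)^* * (sq_mid r s + sq_mid p q).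

Lemma conjCD u v : (u + v)^* = u^* + v^*. Proof. exact: rmorphD. Qed.
Lemma conjCB u v : (u - v)^* = u^* - v^*. Proof. exact: rmorphB. Qed.
Lemma conjCM u v : (u * v)^* = u^* * v^*. Proof. exact: rmorphM. Qed.
Lemma conjCN u : (- u)^* = - u^*. Proof. exact: rmorphN. Qed.
Lemma conjCX u n : (u ^+ n)^* = u^* ^+ n. Proof. exact: rmorphXn. Qed.
Lemma conjCV u : (u^-1)^* = u^*^-1. Proof. exact: fmorphV. Qed.

Local Notation conjE :=
  (conjCD, conjCB, conjCM, conjCN, conjCX, conjCV, conjC_nat, conjCK).

Lemma normC4 u : `|u| ^+ 4 = (u * u^*) ^+ 2.
Proof. by rewrite -normCK -exprM. Qed.

Lemma normC4_increment u v :
  `|v| ^+ 4 / 4 - `|u| ^+ 4 / 4 = abs2_mid u v * 'Re ((mid u v)^* * (v - u)).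
Proof.
by rewrite /abs2_mid /mid ReE !normC4 !normCK !conjE; field.
Qed.

Lemma Re_sq_product_increment u v p q :
  'Re (v^* ^+ 2 * q ^+ 2) - 'Re (u^* ^+ 2 * p ^+ 2)
  = coupling u v p q + coupling p q u v.
Proof.
by rewrite /coupling /sq_mid /mid !ReE !conjE; field.
Qed.

Lemma energy_density_increment u v p q :
  energy_density v q - energy_density u p
  = abs2_mid u v * 'Re ((mid u v)^* * (v - u))
    - coupling u v p q - coupling p q u v.
Proof.
rewrite -[in RHS]addrA -[in RHS]opprD -Re_sq_product_increment.
by rewrite -normC4_increment /energy_density; ring.
Qed.

Lemma coupling0l r s : coupling 0 0 r s = 0.
Proof. by rewrite /coupling subr0 mulr0 rmorph0 mul0r ReE rmorph0 addr0 !mul0r mulr0. Qed.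

Lemma coupling0r u v : coupling u v 0 0 = 0.
Proof. by rewrite /coupling /sq_mid expr0n addr0 !mul0r mulr0 ReE rmorph0 addr0 !mul0r mulr0. Qed.

Lemma site_power_balance u v p q r s :
  abs2_mid u v * 'Re ((mid u v)^* * (v - u)) - coupling u v p q - coupling u v r s
  = 'Re ((v - u)^* * force u v p q r s).
Proof.
by rewrite /coupling /force /abs2_mid /sq_mid /mid !ReE !normCK !conjE; field.
Qed.

Lemma midpoint_step_increment u v p q r s c :
  v = u + c * (- 'i * abs2_mid u v * mid u v
               + 2 * 'i * (mid u v)^* * (sq_mid r s + sq_mid p q)) ->
  v - u = - 'i * c * force u v p q r s.
Proof. by move=> step; rewrite {1}step /force; ring. Qed.

Lemma Re_conj_mul_i_real c w : c^* = c -> 'Re ((- 'i * c * w)^* * w) = 0.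
Proof.
by move=> c_real; rewrite ReE !conjE c_real conjCi; field.
Qed.

End DiscreteGradient.

Lemma big_nat_shift_boundary {V : zmodType} (k : nat -> V) n :
  k 0%N = 0 -> k n = 0 ->
  \sum_(1 <= j < n.+1) k j.-1 = \sum_(1 <= j < n.+1) k j.
Proof.
case: n => [|n] k0 kn; first by rewrite !big_geq.
rewrite big_add1 big_nat_recl // [RHS]big_nat_recr //= k0 kn add0r addr0.
by rewrite big_add1.
Qed.

Lemma bx_right_boundary (R : rcfType) N (b : 'I_N -> R[i]) : bx b N.+1 = 0.
Proof.
rewrite /bx; case: pickP => [i /eqP iN|] //=.
by have := ltn_ord i; rewrite iN ltnn.
Qed.

Theorem proposition2p3 (R : rcfType) (N : nat) (dt : R)
  (b0 b1 : 'I_N -> R[i]) :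
  (1 <= N)%N -> 0 < dt -> scheme dt b0 b1 -> Ham b1 = Ham b0.
Proof.
move=> _ _ hs; set u := bx b0; set v := bx b1.
have dt_real : ((dt%:C)%C : R[i])^* = (dt%:C)%C by exact: conjc_real.
set k := fun j => coupling (u j) (v j) (u j.+1) (v j.+1).
have shift : \sum_(1 <= j < N.+1) coupling (u j.-1) (v j.-1) (u j) (v j)
           = \sum_(1 <= j < N.+1) k j.
  rewrite -(big_nat_shift_boundary k); last 2 first.
  - exact: coupling0l.
  - by rewrite /k /u /v !bx_right_boundary coupling0r.
  by apply: eq_big_nat => -[|j].
apply/eqP; rewrite -subr_eq0 /Ham -sumrB.
under eq_bigr do rewrite energy_density_increment.
rewrite !sumrB shift -!sumrB big_nat_cond big1 // => j /andP[/andP[j1 jN] _].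
have j_range : (1 <= j <= N)%N by rewrite j1 -ltnS.
move/midpoint_step_increment: (hs j j_range) => step.
rewrite /k site_power_balance step.
exact: Re_conj_mul_i_real dt_real.
Qed.
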